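(* Let $\phi$ solve $\widetilde\Box_g\phi=F$, where $g$ is a metric such that $H^{\alpha\beta}=g^{\alpha\beta}-m^{\alpha\beta}$ satisfies $|H^{L\underline L}|<\frac14$. Then at points with $r>0$, $$\Big|\Big(4\partial_s-\frac{H_{LL}}{2g^{L\underline L}}\partial_q-\frac{\overline{\mathrm{tr}}\,H+H_{L\underline L}}{2g^{L\underline L}\,r}\Big)\partial_q(r\phi)+\frac{rF}{2g^{L\underline L}}\Big|\lesssim r|\Delta_\omega\phi|+|H|_{L\mathcal T}\big(r|\bar\partial\partial\phi|+|\partial\phi|\big)+|H|\big(r|\bar\partial^2\phi|+|\bar\partial\phi|+r^{-1}|\phi|\big),$$ where $\Delta_\omega=\delta^{ij}\bar\partial_i\bar\partial_j$.
   Context: Coordinates $(t,x)$, $r=|x|$, $\omega=x/r$; $m$ Minkowski metric; indices raised/lowered with $m$, $g^{\alpha\beta}$ the inverse of $g_{\alpha\beta}$; $\widetilde\Box_g=g^{\alpha\beta}\partial_\alpha\partial_\beta$. $\partial_s=\frac12(\partial_t+\partial_r)$, $\partial_q=\frac12(\partial_r-\partial_t)$. Null frame $L=\partial_t+\partial_r$, $\underline L=\partial_t-\partial_r$, $S_1,S_2$ orthonormal tangent to spheres, $\mathcal T=\{L,S_1,S_2\}$. Lower-index frame components: $H_{XY}=m_{\alpha\mu}m_{\beta\nu}H^{\mu\nu}X^\alpha Y^\beta$. Upper frame components $\pi^{UV}$ of a tensor $\pi^{\alpha\beta}$ are defined by $\pi^{\alpha\beta}=\sum_{U,V\in\{L,\underline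 L,S_1,S_2\}}\pi^{UV}U^\alpha V^\beta$; in particular $\pi^{L\underline L}=\frac14\pi_{\underline LL}$ (so $m^{L\underline L}=-1/2$ and $g^{L\underline L}=-\frac12+H^{L\underline L}$). $\overline{\mathrm{tr}}\,H=H_{S_1S_1}+H_{S_2S_2}$; $|H|_{L\mathcal T}=\sum_{T\in\mathcal T}|H_{LT}|$; $|H|$ sum of absolute values of components. Tangential derivatives $\bar\partial_0=\partial_t+\partial_r$, $\bar\partial_i=\partial_i-\omega_i\omega^j\partial_j$; $|\bar\partial\phi|=\sum|\bar\partial_\alpha\phi|$, $|\bar\partial\partial\phi|=\sum|\bar\partial_\alpha\partial_\beta\phi|$, $|\bar\partial^2\phi|^2=\sum|\bar\partial_\alpha\bar\partial_\beta\phi|^2$. $\lesssim$ is up to an absolute constant. *)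

From Stdlib Require Import Reals.
From Coquelicot Require Import Coquelicot.
Open Scope R_scope.

(* Points of R^{1+3}: (t, x1, x2, x3). Index 0 = t, indices 1,2,3 = space. *)
Definition pt : Type := (R * R * R * R)%type.

Definition coord (p : pt) (i : nat) : R :=
  match p with (t, x1, x2, x3) =>
    match i with 0%nat => t | 1%nat => x1 | 2%nat => x2 | _ => x3 end end.

Definition upd (p : pt) (i : nat) (h : R) : pt :=
  match p with (t, x1, x2, x3) =>
    match i with
    | 0%nat => (h, x1, x2, x3) | 1%nat => (t, h, x2, x3)
    | 2%nat => (t, x1, h, x3) | _ => (t, x1, x2, h) end end.

Definition sum4 (f : nat -> R) : R := f 0%nat + f 1%nat + f 2%nat + f 3%nat.
Definition sum3 (f : nat -> R) : R := f 1%nat + f 2%nat + f 3%nat.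

Definition pd (i : nat) (u : pt -> R) (p : pt) : R :=
  Derive (fun h => u (upd p i h)) (coord p i).

Definition C2 (phi : pt -> R) : Prop :=
  (forall i p, (i < 4)%nat -> ex_derive (fun h => phi (upd p i h)) (coord p i)) /\
  (forall i j p, (i < 4)%nat -> (j < 4)%nat ->
       ex_derive (fun h => pd j phi (upd p i h)) (coord p i)) /\
  (forall i j p, (i < 4)%nat -> (j < 4)%nat -> continuous (pd i (pd j phi)) p).

Definition rad (p : pt) : R := sqrt (sum3 (fun i => coord p i ^ 2)).
Definition om (p : pt) (i : nat) : R := coord p i / rad p.

Definition dr (u : pt -> R) (p : pt) : R := sum3 (fun j => om p j * pd j u p).
Definition ds (u : pt -> R) (p : pt) : R := (pd 0 u p + dr u p) / 2.
Definition dq (u : pt -> R) (p : pt) : R := (dr u p - pd 0 u p) / 2.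

Definition tb (a : nat) (u : pt -> R) (p : pt) : R :=
  match a with
  | 0%nat => pd 0 u p + dr u p
  | _ => pd a u p - om p a * dr u p
  end.

(* Minkowski metric m = diag(-1,1,1,1) (same matrix for upper/lower indices) *)
Definition mink (a b : nat) : R :=
  if Nat.eqb a b then (if Nat.eqb a 0 then -1 else 1) else 0.

Definition Lv (p : pt) (a : nat) : R := match a with 0%nat => 1 | _ => om p a end.
Definition Lbv (p : pt) (a : nat) : R := match a with 0%nat => 1 | _ => - om p a end.

Definition lowc (Hup : nat -> nat -> R) (X Y : nat -> R) : R :=
  sum4 (fun a => sum4 (fun b => sum4 (fun mu => sum4 (fun nu =>
    mink a mu * mink b nu * Hup mu nu * X a * Y b)))).

Definition sphere_frame (p : pt) (S1 S2 : nat -> R) : Prop :=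
  S1 0%nat = 0 /\ S2 0%nat = 0 /\
  sum3 (fun i => S1 i * S1 i) = 1 /\ sum3 (fun i => S2 i * S2 i) = 1 /\
  sum3 (fun i => S1 i * S2 i) = 0 /\
  sum3 (fun i => S1 i * om p i) = 0 /\ sum3 (fun i => S2 i * om p i) = 0.

(* Write [g^{ab} = m^{ab} + H^{ab}] and multiply the left-hand side by [2 g^{L Lbar}]. The
   Minkowski part is the classical identity [r Box phi = 4 d_s d_q (r phi) + r Delta_omega phi].
   Expanding [r H^{ab} d_a d_b phi] in the null frame produces exactly the [H_{L Lbar} d_s d_q],
   [H_{LL} d_q^2] and [(tr H + H_{L Lbar}) r^{-1} d_q] terms (acting on [r phi]) subtracted on the
   left; what remains is [H_{LS}] times [bar d_S d_{Lbar} phi], [H] times second derivatives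
   tangential in both slots, and lower-order terms. At a point all of this is a polynomial identity
   in [omega], [1/r] and the derivatives of [phi], valid on [|omega| = 1]. Finally
   [|H^{L Lbar}| < 1/4] gives [g^{L Lbar} < -1/4], so dividing by [2 g^{L Lbar}] costs a
   factor 2. *)

From Stdlib Require Import Reals Lra Lia Nsatz.
From Coquelicot Require Import Coquelicot.
Open Scope R_scope.

Ltac index_cases i := destruct i as [|[|[|[|i]]]]; try lia.

Lemma upd_coord p a : upd p a (coord p a) = p.
Proof. destruct p as [[[t x1] x2] x3]; index_cases a; reflexivity. Qed.

Lemma upd_upd p a h k : upd (upd p a h) a k = upd p a k.
Proof. destruct p as [[[t x1] x2] x3]; index_cases a; reflexivity. Qed.

Lemma upd_comm p a b u v : (a < 4)%nat -> (b < 4)%nat -> a <> b ->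
  upd (upd p a u) b v = upd (upd p b v) a u.
Proof.
  intros; destruct p as [[[t x1] x2] x3]; index_cases a; index_cases b; reflexivity.
Qed.

Lemma coord_upd_eq p a u : (a < 4)%nat -> coord (upd p a u) a = u.
Proof. intros; destruct p as [[[t x1] x2] x3]; index_cases a; reflexivity. Qed.

Lemma coord_upd_neq p a b u : (a < 4)%nat -> (b < 4)%nat -> a <> b ->
  coord (upd p a u) b = coord p b.
Proof.
  intros; destruct p as [[[t x1] x2] x3]; index_cases a; index_cases b; reflexivity.
Qed.

(** * Partial derivatives *)

Definition has_pd (a : nat) (u : pt -> R) (p : pt) (l : R) : Prop :=
  is_derive (fun h => u (upd p a h)) (coord p a) l.

Lemma pd_of_has_pd a u p l : has_pd a u p l -> pd a u p = l.
Proof. intro H; exact (is_derive_unique _ _ _ H). Qed.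

Lemma has_pd_eq a u p l l' : has_pd a u p l -> l = l' -> has_pd a u p l'.
Proof. now intros H <-. Qed.

Lemma has_pd_ext a u v p l : (forall x, u x = v x) -> has_pd a u p l -> has_pd a v p l.
Proof. intros E H; exact (is_derive_ext _ _ _ _ (fun h => E _) H). Qed.

Lemma has_pd_const a p c : has_pd a (fun _ => c) p 0.
Proof. exact (is_derive_const (K := R_AbsRing) (V := R_NormedModule) c _). Qed.

Lemma has_pd_plus a u v p l1 l2 : has_pd a u p l1 -> has_pd a v p l2 ->
  has_pd a (fun x => u x + v x) p (l1 + l2).
Proof. exact (is_derive_plus _ _ _ _ _). Qed.

Lemma has_pd_minus a u v p l1 l2 : has_pd a u p l1 -> has_pd a v p l2 ->
  has_pd a (fun x => u x - v x) p (l1 - l2).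
Proof. exact (is_derive_minus _ _ _ _ _). Qed.

Lemma has_pd_mult a u v p l1 l2 : has_pd a u p l1 -> has_pd a v p l2 ->
  has_pd a (fun x => u x * v x) p (l1 * v p + u p * l2).
Proof.
  intros Hu Hv.
  pose proof (is_derive_mult _ _ _ _ _ Hu Hv (fun x y => Rmult_comm x y)) as H.
  cbv beta in H; rewrite upd_coord in H. exact H.
Qed.

Lemma has_pd_div a u v p l1 l2 : has_pd a u p l1 -> has_pd a v p l2 -> v p <> 0 ->
  has_pd a (fun x => u x / v x) p ((l1 * v p - u p * l2) / v p ^ 2).
Proof.
  intros Hu Hv Hnz. rewrite <- (upd_coord p a) in Hnz.
  pose proof (is_derive_div _ _ _ _ _ Hu Hv Hnz) as H.
  cbv beta in H; rewrite upd_coord in H. exact H.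
Qed.

Lemma has_pd_scal a u p k l : has_pd a u p l -> has_pd a (fun x => k * u x) p (k * l).
Proof. exact (is_derive_scal _ _ k _). Qed.

Lemma has_pd_sum3 a (U : nat -> pt -> R) p (l : nat -> R) :
  (forall j, (1 <= j <= 3)%nat -> has_pd a (U j) p (l j)) ->
  has_pd a (fun x => sum3 (fun j => U j x)) p (sum3 l).
Proof. intro H; unfold sum3; repeat apply has_pd_plus; apply H; lia. Qed.

(** * Frame components at a point *)

Definition spatial (a : nat) : R := match a with 0%nat => 0 | _ => 1 end.
Definition kron (a b : nat) : R := if Nat.eqb a b then 1 else 0.

Section FrameComponents.
Variables (w : nat -> R) (r : R).

Definition Lvec (a : nat) : R := match a with 0%nat => 1 | _ => w a end.
Definition Lbvec (a : nat) : R := match a with 0%nat => 1 | _ => - w a end.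
Definition proj (i j : nat) : R := kron i j - w i * w j.

Definition radial (V : nat -> R) : R := sum3 (fun j => w j * V j).
Definition tangential (V : nat -> R) (a : nat) : R :=
  match a with 0%nat => V 0%nat + radial V | _ => V a - w a * radial V end.
Definition s_comp (V : nat -> R) : R := (V 0%nat + radial V) / 2.
Definition q_comp (V : nat -> R) : R := (radial V - V 0%nat) / 2.

Definition d_omega (a j : nat) : R := spatial a * (kron a j - w a * w j) / r.

(* [V j] and [dV a j] stand for [d_j u] and [d_a d_j u] at a point, [w] for [omega] and [r] for
   [|x|]; [d_radial a], [d_tangential a b] and [d_q_comp a] are then [d_a] of [d_r u], [bar d_b u]
   and [d_q u] there. *)
Variables (V : nat -> R) (dV : nat -> nat -> R).

Definition d_radial (a : nat) : R := sum3 (fun j => d_omega a j * V j + w j * dV a j).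
Definition d_tangential (a b : nat) : R :=
  match b with
  | 0%nat => dV a 0%nat + d_radial a
  | _ => dV a b - (d_omega a b * radial V + w b * d_radial a)
  end.
Definition d_q_comp (a : nat) : R := (d_radial a - dV a 0%nat) / 2.

End FrameComponents.

Definition grad (u : pt -> R) (p : pt) (a : nat) : R := pd a u p.
Definition hess (u : pt -> R) (p : pt) (a b : nat) : R := pd a (pd b u) p.

Lemma has_pd_coord a b p : (a < 4)%nat -> (b < 4)%nat ->
  has_pd a (fun x => coord x b) p (kron a b).
Proof.
  intros Ha Hb; unfold has_pd, kron; destruct p as [[[t x1] x2] x3].
  index_cases a; index_cases b; simpl;
    first [ exact (is_derive_id (K := R_AbsRing) _)
          | exact (is_derive_const (K := R_AbsRing) (V := R_NormedModule) _ _) ].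
Qed.

Lemma has_pd_rad a p : (a < 4)%nat -> 0 < rad p -> has_pd a rad p (spatial a * om p a).
Proof.
  intros Ha Hr; unfold has_pd, om, rad, sum3 in *; destruct p as [[[t x1] x2] x3].
  index_cases a; simpl in *.
  - rewrite Rmult_0_l; exact (is_derive_const (K := R_AbsRing) (V := R_NormedModule) _ _).
  all: auto_derive; [apply sqrt_lt_0_alt; now rewrite sqrt_0 | field; lra].
Qed.

Lemma has_pd_om a j p : (a < 4)%nat -> (1 <= j <= 3)%nat -> 0 < rad p ->
  has_pd a (fun x => om x j) p (d_omega (om p) (rad p) a j).
Proof.
  intros Ha Hj Hr; unfold om at 1.
  eapply has_pd_eq.
  - apply has_pd_div; [apply has_pd_coord; lia | now apply has_pd_rad | lra].
  - unfold d_omega, om, kron, spatial; index_cases a; index_cases j; simpl; field; lra.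
Qed.

Lemma rad_pos_near a p : (a < 4)%nat -> 0 < rad p ->
  locally (coord p a) (fun h => 0 < rad (upd p a h)).
Proof.
  intros Ha Hr.
  assert (Hc : continuous (fun h => rad (upd p a h)) (coord p a)).
  { apply (ex_derive_continuous (K := R_AbsRing) (V := R_NormedModule)).
    eexists; exact (has_pd_rad a p Ha Hr). }
  apply Hc, (open_gt 0); now rewrite upd_coord.
Qed.

Section FrameDerivatives.
Variables (u : pt -> R) (p : pt) (a : nat) (dU : nat -> nat -> R).
Hypotheses (Ha : (a < 4)%nat) (Hr : 0 < rad p)
  (HdU : forall j, (j < 4)%nat -> has_pd a (pd j u) p (dU a j)).

Lemma has_pd_dr : has_pd a (dr u) p (d_radial (om p) (rad p) (grad u p) dU a).
Proof.
  apply has_pd_sum3; intros j Hj.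
  apply has_pd_mult; [now apply has_pd_om | apply HdU; lia].
Qed.

Lemma has_pd_tb b : (b < 4)%nat ->
  has_pd a (tb b u) p (d_tangential (om p) (rad p) (grad u p) dU a b).
Proof.
  intro Hb; destruct b as [|b]; simpl.
  - apply has_pd_plus; [apply HdU; lia | exact has_pd_dr].
  - apply has_pd_minus; [apply HdU; lia|].
    apply has_pd_mult; [apply has_pd_om; [exact Ha | lia | exact Hr] | exact has_pd_dr].
Qed.

Lemma has_pd_dq : has_pd a (dq u) p (d_q_comp (om p) (rad p) (grad u p) dU a).
Proof.
  apply (has_pd_ext _ (fun x => / 2 * (dr u x - pd 0 u x))); [intro; unfold dq; field|].
  eapply has_pd_eq; [apply has_pd_scal, has_pd_minus; [exact has_pd_dr | apply HdU; lia]|].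
  unfold d_q_comp; field.
Qed.

End FrameDerivatives.

Section FrameComponentsAtPoint.
Variables (u : pt -> R) (p : pt) (V : nat -> R).
Hypothesis HV : forall a, (a < 4)%nat -> pd a u p = V a.

Lemma ds_of_pd : ds u p = s_comp (om p) V.
Proof. unfold ds, dr, s_comp, radial, sum3; rewrite !HV by lia; reflexivity. Qed.

Lemma dq_of_pd : dq u p = q_comp (om p) V.
Proof. unfold dq, dr, q_comp, radial, sum3; rewrite !HV by lia; reflexivity. Qed.

Lemma tb_of_pd b : (b < 4)%nat -> tb b u p = tangential (om p) V b.
Proof.
  intro Hb; destruct b; unfold tb, dr, tangential, radial, sum3; rewrite !HV by lia; reflexivity.
Qed.

End FrameComponentsAtPoint.

Section WeightedGradient.
Variables (w : nat -> R) (r ph : R) (D : nat -> R) (DD : nat -> nat -> R).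

Definition grad_rphi (c : nat) : R := spatial c * w c * ph + r * D c.
Definition hess_rphi (a c : nat) : R :=
  spatial c * (d_omega w r a c * ph + w c * D a) + spatial a * w a * D c + r * DD a c.

End WeightedGradient.

Lemma has_pd_C2 phi p a : C2 phi -> (a < 4)%nat -> has_pd a phi p (pd a phi p).
Proof. intros [Hd _] Ha; apply Derive_correct, Hd, Ha. Qed.

Lemma has_pd_pd_C2 phi p a j : C2 phi -> (a < 4)%nat -> (j < 4)%nat ->
  has_pd a (pd j phi) p (hess phi p a j).
Proof. intros [_ [Hd _]] Ha Hj; apply Derive_correct, Hd; assumption. Qed.

Lemma pd_rphi phi x j : C2 phi -> 0 < rad x -> (j < 4)%nat ->
  pd j (fun y => rad y * phi y) x = grad_rphi (om x) (rad x) (phi x) (grad phi x) j.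
Proof.
  intros HC Hr Hj; apply pd_of_has_pd.
  eapply has_pd_eq; [apply has_pd_mult; [now apply has_pd_rad | now apply has_pd_C2]|].
  unfold grad_rphi, grad; ring.
Qed.

Lemma has_pd_pd_rphi phi p a j : C2 phi -> 0 < rad p -> (a < 4)%nat -> (j < 4)%nat ->
  has_pd a (pd j (fun y => rad y * phi y)) p
    (hess_rphi (om p) (rad p) (phi p) (grad phi p) (hess phi p) a j).
Proof.
  intros HC Hr Ha Hj.
  apply (is_derive_ext_loc (fun h =>
    grad_rphi (om (upd p a h)) (rad (upd p a h)) (phi (upd p a h)) (grad phi (upd p a h)) j)).
  { apply (filter_imp (fun h => 0 < rad (upd p a h))); [|now apply rad_pos_near].
    intros h Hh; symmetry; now apply pd_rphi. }
  change (has_pd a (fun x => spatial j * om x j * phi x + rad x * pd j phi x) p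
    (hess_rphi (om p) (rad p) (phi p) (grad phi p) (hess phi p) a j)).
  destruct j as [|j]; simpl spatial.
  - apply (has_pd_ext _ (fun x => rad x * pd 0 phi x)); [intro; ring|].
    eapply has_pd_eq; [apply has_pd_mult; [now apply has_pd_rad | now apply has_pd_pd_C2]|].
    unfold hess_rphi, grad, hess; simpl spatial; ring.
  - eapply has_pd_eq.
    + apply has_pd_plus; apply has_pd_mult.
      * apply has_pd_mult; [apply has_pd_const | apply has_pd_om; [assumption | lia | assumption]].
      * now apply has_pd_C2.
      * now apply has_pd_rad.
      * now apply has_pd_pd_C2.
    + unfold hess_rphi, grad, hess; simpl spatial; ring.
Qed.

(** * Symmetry of second derivatives *)

Lemma ball_upd2 p a b u v (d : posreal) : (a < 4)%nat -> (b < 4)%nat -> a <> b ->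
  Rabs (u - coord p a) < d -> Rabs (v - coord p b) < d -> ball p d (upd (upd p a u) b v).
Proof.
  intros Ha Hb Hab Hu Hv; destruct p as [[[t x1] x2] x3].
  index_cases a; index_cases b; repeat split; simpl in *;
    first [ exact Hu | exact Hv | apply ball_center ].
Qed.

Section TwoCoordinates.
Variables (p : pt) (a b : nat).
Hypotheses (Ha : (a < 4)%nat) (Hb : (b < 4)%nat) (Hab : a <> b).

Let q u v := upd (upd p a u) b v.

Lemma upd_q_first u v z : upd (q u v) a z = q z v.
Proof. unfold q; rewrite (upd_comm p a b), upd_upd, upd_comm; auto. Qed.

Lemma coord_q_first u v : coord (q u v) a = u.
Proof. unfold q; rewrite coord_upd_neq, coord_upd_eq; auto. Qed.

Lemma coord_q_second u v : coord (q u v) b = v.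
Proof. unfold q; apply coord_upd_eq, Hb. Qed.

Lemma q_center : q (coord p a) (coord p b) = p.
Proof. unfold q; now rewrite !upd_coord. Qed.

Lemma pd_first (G : pt -> R) u v : pd a G (q u v) = Derive (fun z => G (q z v)) u.
Proof.
  unfold pd; rewrite coord_q_first.
  apply Derive_ext; intro z; now rewrite upd_q_first.
Qed.

Lemma pd_second (G : pt -> R) u v : pd b G (q u v) = Derive (fun z => G (q u z)) v.
Proof.
  unfold pd; rewrite coord_q_second.
  apply Derive_ext; intro z; unfold q; now rewrite upd_upd.
Qed.

Lemma ex_derive_first (G : pt -> R) u v :
  (forall x, ex_derive (fun h => G (upd x a h)) (coord x a)) -> ex_derive (fun z => G (q z v)) u.
Proof.
  intro HG; specialize (HG (q u v)); rewrite coord_q_first in HG.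
  apply (ex_derive_ext _ _ _ (fun z => f_equal G (upd_q_first u v z)) HG).
Qed.

Lemma ex_derive_second (G : pt -> R) u v :
  (forall x, ex_derive (fun h => G (upd x b h)) (coord x b)) -> ex_derive (fun z => G (q u z)) v.
Proof.
  intro HG; specialize (HG (q u v)); rewrite coord_q_second in HG.
  apply (ex_derive_ext _ _ _ (fun z => f_equal G (upd_upd _ b v z)) HG).
Qed.

Lemma continuity_2d_q (G : pt -> R) : continuous G p ->
  continuity_2d_pt (fun u v => G (q u v)) (coord p a) (coord p b).
Proof.
  intros HG eps.
  destruct (HG (ball (G p) eps) (locally_ball (G p) eps)) as [d Hd].
  exists d; intros u v Hu Hv; rewrite q_center.
  apply Hd, ball_upd2; assumption.
Qed.

Lemma hess_sym_neq phi : C2 phi -> pd a (pd b phi) p = pd b (pd a phi) p.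
Proof.
  intros [Hd1 [Hd2 Hcont]].
  set (f z t := phi (q z t)).
  assert (Hab_ba : forall u v,
    Derive (fun z => Derive (fun t => f z t) v) u = pd a (pd b phi) (q u v)).
  { intros u v; rewrite pd_first; apply Derive_ext; intro z; now rewrite pd_second. }
  assert (Hba_ab : forall u v,
    Derive (fun z => Derive (fun t => f t z) u) v = pd b (pd a phi) (q u v)).
  { intros u v; rewrite pd_second; apply Derive_ext; intro z; now rewrite pd_first. }
  rewrite <- q_center at 1 2; rewrite <- Hab_ba, <- Hba_ab.
  apply Schwarz.
  - exists (mkposreal 1 Rlt_0_1); intros u v _ _; repeat split.
    + apply ex_derive_first; intro; apply Hd1, Ha.
    + apply ex_derive_second; intro; apply Hd1, Hb.
    + apply (ex_derive_ext (fun z => pd b phi (q z v))); [intro; now rewrite pd_second|].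
      apply ex_derive_first; intro; now apply Hd2.
    + apply (ex_derive_ext (fun z => pd a phi (q u z))); [intro; now rewrite pd_first|].
      apply ex_derive_second; intro; now apply Hd2.
  - intro eps; destruct (continuity_2d_q _ (Hcont a b p Ha Hb) eps) as [d Hd].
    exists d; intros u v Hu Hv; rewrite !Hab_ba; now apply Hd.
  - intro eps; destruct (continuity_2d_q _ (Hcont b a p Hb Ha) eps) as [d Hd].
    exists d; intros u v Hu Hv; rewrite !Hba_ab; now apply Hd.
Qed.

End TwoCoordinates.

Lemma hess_sym phi p a b : C2 phi -> (a < 4)%nat -> (b < 4)%nat ->
  hess phi p a b = hess phi p b a.
Proof.
  intros HC Ha Hb; unfold hess.
  destruct (Nat.eq_dec a b) as [<-|Hab]; [reflexivity|].
  now apply hess_sym_neq.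
Qed.

(** * The null frame identity *)

(* At a point, [ph], [D], [DD] and [Hh] stand for [phi], [d phi], [d d phi] and [H]. *)
Section PointIdentity.
Variables (w : nat -> R) (r ph : R) (D : nat -> R) (DD Hh : nat -> nat -> R).

Definition unit_vec (i a : nat) : R := kron a i.
Definition g_LLb : R := - / 2 + / 4 * lowc Hh (Lbvec w) (Lvec w).
Definition tb_d (a b : nat) : R := tangential w (fun c => DD c b) a.
Definition tb_tb (a b : nat) : R := tangential w (fun c => d_tangential w r D DD c b) a.
Definition lap_omega : R := sum3 (fun i => tb_tb i i).
Definition box_m : R := sum4 (fun a => sum4 (fun b => mink a b * DD a b)).
Definition contr_H : R := sum4 (fun a => sum4 (fun b => Hh a b * DD a b)).
Definition trace_proj : R := sum3 (fun i => sum3 (fun j => Hh i j * proj w i j)).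
Definition d_dq_rphi (a : nat) : R :=
  d_q_comp w r (grad_rphi w r ph D) (hess_rphi w r ph D DD) a.

Definition lhs_val (trH F : R) : R :=
  4 * s_comp w d_dq_rphi
  - lowc Hh (Lvec w) (Lvec w) / (2 * g_LLb) * q_comp w d_dq_rphi
  - (trH + lowc Hh (Lvec w) (Lbvec w)) / (2 * g_LLb * r) * q_comp w (grad_rphi w r ph D)
  + r * F / (2 * g_LLb).

Definition err_low : R :=
  (trace_proj + lowc Hh (Lvec w) (Lbvec w)) * (tangential w D 0 - ph / r) / 2.
Definition err_tt : R :=
  lowc Hh (Lbvec w) (Lbvec w) / 4 * tb_tb 0 0
  - sum3 (fun i => sum3 (fun j => lowc Hh (Lbvec w) (unit_vec i) * proj w i j * tb_tb 0 j))
  + sum3 (fun m => sum3 (fun n =>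
      Hh m n * sum3 (fun i => sum3 (fun j => proj w m i * proj w n j * tb_tb i j)))).
Definition tb_dLb (j : nat) : R := sum4 (fun a => Lbvec w a * tb_d j a).
(* With [proj = S1 S1^T + S2 S2^T] this is [sum_S H_{LS} bar d_S d_{Lbar} phi]. *)
Definition err_LS : R :=
  sum3 (fun i => sum3 (fun j => lowc Hh (Lvec w) (unit_vec i) * proj w i j * tb_dLb j)).

Hypotheses (HW : w 1 * w 1 + w 2 * w 2 + w 3 * w 3 = 1) (Hr : r <> 0)
  (HDD : forall a b, (a < 4)%nat -> (b < 4)%nat -> DD a b = DD b a)
  (HH : forall a b, (a < 4)%nat -> (b < 4)%nat -> Hh a b = Hh b a).

Ltac expand_point_values :=
  unfold err_low, err_tt, err_LS, lap_omega, box_m, contr_H, trace_proj, d_dq_rphi,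
    tb_tb, tb_dLb, tb_d, unit_vec, s_comp, q_comp, d_q_comp, d_tangential, d_radial,
    tangential, radial,
    grad_rphi, hess_rphi, d_omega, proj, Lvec, Lbvec, lowc, sum3, sum4, mink, kron, spatial; simpl;
  rewrite ?(HDD 1 0), ?(HDD 2 0), ?(HDD 3 0), ?(HDD 2 1), ?(HDD 3 1), ?(HDD 3 2),
    ?(HH 1 0), ?(HH 2 0), ?(HH 3 0), ?(HH 2 1), ?(HH 3 1), ?(HH 3 2) by lia.

Definition minkowski_part : R := r * box_m - 4 * s_comp w d_dq_rphi.
Definition perturbation_part : R :=
  2 * lowc Hh (Lbvec w) (Lvec w) * s_comp w d_dq_rphi
  - lowc Hh (Lvec w) (Lvec w) * q_comp w d_dq_rphi
  - (trace_proj + lowc Hh (Lvec w) (Lbvec w)) / r * q_comp w (grad_rphi w r ph D)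
  + r * contr_H.

Lemma lhs_val_split : g_LLb <> 0 ->
  2 * g_LLb * lhs_val trace_proj (box_m + contr_H) = minkowski_part + perturbation_part.
Proof.
  intro Hg; unfold lhs_val, minkowski_part, perturbation_part.
  unfold g_LLb in *; field; split; [exact Hr | contradict Hg; lra].
Qed.

(* Both identities hold modulo [|omega|^2 = 1], which [field] uses as a rewrite rule. *)
Lemma minkowski_identity : minkowski_part = r * lap_omega.
Proof.
  assert (HW3 : w 3 * w 3 = 1 - w 1 * w 1 - w 2 * w 2) by lra.
  unfold minkowski_part; expand_point_values; field [HW3]; exact Hr.
Qed.

Lemma perturbation_identity :
  perturbation_part = err_low - lowc Hh (Lvec w) (Lvec w) * q_comp w D + r * err_tt - r * err_LS.
Proof.
  assert (HW3 : w 3 * w 3 = 1 - w 1 * w 1 - w 2 * w 2) by lra.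
  unfold perturbation_part; expand_point_values; field [HW3]; exact Hr.
Qed.

Definition null_frame_rhs : R :=
  r * lap_omega + err_low - lowc Hh (Lvec w) (Lvec w) * q_comp w D + r * err_tt - r * err_LS.

Lemma null_frame_identity : g_LLb <> 0 ->
  2 * g_LLb * lhs_val trace_proj (box_m + contr_H) = null_frame_rhs.
Proof.
  intro Hg; rewrite lhs_val_split, minkowski_identity, perturbation_identity by assumption.
  unfold null_frame_rhs; ring.
Qed.

End PointIdentity.

(** * Estimates *)

Lemma Rabs_sum3_le (f : nat -> R) : Rabs (sum3 f) <= sum3 (fun i => Rabs (f i)).
Proof.
  unfold sum3; eapply Rle_trans; [apply Rabs_triang|].
  apply Rplus_le_compat_r, Rabs_triang.
Qed.

Lemma Rabs_sum4_le (f : nat -> R) : Rabs (sum4 f) <= sum4 (fun i => Rabs (f i)).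
Proof.
  unfold sum4; eapply Rle_trans; [apply Rabs_triang|].
  apply Rplus_le_compat_r; eapply Rle_trans; [apply Rabs_triang|].
  apply Rplus_le_compat_r, Rabs_triang.
Qed.

Lemma sum3_le_compat (f g : nat -> R) :
  (forall i, (1 <= i <= 3)%nat -> f i <= g i) -> sum3 f <= sum3 g.
Proof. intro H; unfold sum3; repeat apply Rplus_le_compat; apply H; lia. Qed.

Lemma sum4_le_compat (f g : nat -> R) :
  (forall i, (i < 4)%nat -> f i <= g i) -> sum4 f <= sum4 g.
Proof. intro H; unfold sum4; repeat apply Rplus_le_compat; apply H; lia. Qed.

Lemma sum3_le_sum4 (f : nat -> R) : 0 <= f 0%nat -> sum3 f <= sum4 f.
Proof. unfold sum3, sum4; lra. Qed.

Lemma sum4_nonneg (f : nat -> R) : (forall i, 0 <= f i) -> 0 <= sum4 f.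
Proof.
  intro H; unfold sum4.
  pose proof (H 0%nat); pose proof (H 1%nat); pose proof (H 2%nat); pose proof (H 3%nat); lra.
Qed.

Lemma sum4_term_le (f : nat -> R) a : (forall i, 0 <= f i) -> (a < 4)%nat -> f a <= sum4 f.
Proof.
  intros H Ha; unfold sum4.
  pose proof (H 0%nat); pose proof (H 1%nat); pose proof (H 2%nat); pose proof (H 3%nat).
  index_cases a; lra.
Qed.

Lemma Rabs_sum3_bound (f : nat -> R) M :
  (forall i, (1 <= i <= 3)%nat -> Rabs (f i) <= M) -> Rabs (sum3 f) <= 3 * M.
Proof.
  intro H; eapply Rle_trans; [apply Rabs_sum3_le|].
  unfold sum3; pose proof (H 1%nat ltac:(lia)); pose proof (H 2%nat ltac:(lia));
    pose proof (H 3%nat ltac:(lia)); lra.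
Qed.

Lemma Rabs_combination5_le a b c d e :
  Rabs (a + b - c + d - e) <= Rabs a + Rabs b + Rabs c + Rabs d + Rabs e.
Proof.
  apply Rabs_le.
  pose proof (Rle_abs a); pose proof (Rle_abs b); pose proof (Rle_abs c);
    pose proof (Rle_abs d); pose proof (Rle_abs e).
  pose proof (Rabs_maj2 a); pose proof (Rabs_maj2 b); pose proof (Rabs_maj2 c);
    pose proof (Rabs_maj2 d); pose proof (Rabs_maj2 e).
  lra.
Qed.

Lemma Rabs_mult_le x y X Y : Rabs x <= X -> Rabs y <= Y -> Rabs (x * y) <= X * Y.
Proof. intros; rewrite Rabs_mult; apply Rmult_le_compat; auto using Rabs_pos. Qed.

Lemma Rabs_le_sqrt x s : x ^ 2 <= s -> Rabs x <= sqrt s.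
Proof.
  intro H; rewrite <- sqrt_Rsqr_abs; apply sqrt_le_1_alt.
  unfold Rsqr; simpl in H; lra.
Qed.

Lemma Rabs_le_1_of_sqr_add x y : x * x + y <= 1 -> 0 <= y -> Rabs x <= 1.
Proof. intros H Hy; unfold Rabs; destruct (Rcase_abs x); nra. Qed.

Definition unit_bounded (X : nat -> R) : Prop := forall a, (a < 4)%nat -> Rabs (X a) <= 1.

Lemma ev_unit_bounded i : unit_bounded (unit_vec i).
Proof.
  intros a _; unfold unit_vec, kron; destruct (Nat.eqb a i);
    [rewrite Rabs_R1 | rewrite Rabs_R0]; lra.
Qed.

Lemma Rabs_mink_diag a : Rabs (mink a a) = 1.
Proof.
  unfold mink; rewrite Nat.eqb_refl.
  destruct (Nat.eqb a 0); unfold Rabs; destruct (Rcase_abs _); lra.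
Qed.

Lemma lowc_le_norm (Hh : nat -> nat -> R) X Y : unit_bounded X -> unit_bounded Y ->
  Rabs (lowc Hh X Y) <= sum4 (fun a => sum4 (fun b => Rabs (Hh a b))).
Proof.
  intros HX HY.
  assert (E : lowc Hh X Y = sum4 (fun a => sum4 (fun b =>
    (mink a a * mink b b) * (Hh a b * (X a * Y b))))) by (unfold lowc, sum4, mink; simpl; ring).
  rewrite E; eapply Rle_trans; [apply Rabs_sum4_le|]; apply sum4_le_compat; intros a Ha.
  eapply Rle_trans; [apply Rabs_sum4_le|]; apply sum4_le_compat; intros b Hb.
  rewrite Rabs_mult, <- (Rmult_1_l (Rabs (Hh a b))).
  apply Rmult_le_compat; auto using Rabs_pos.
  - rewrite Rabs_mult, !Rabs_mink_diag; lra.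
  - rewrite !Rabs_mult.
    pose proof (HX a Ha); pose proof (HY b Hb); pose proof (Rabs_pos (Hh a b));
      pose proof (Rabs_pos (X a)); pose proof (Rabs_pos (Y b)).
    assert (Rabs (X a) * Rabs (Y b) <= 1) by nra; nra.
Qed.

Section PointEstimate.
Variables (w : nat -> R) (r ph : R) (D : nat -> R) (DD Hh : nat -> nat -> R) (S1 S2 : nat -> R).

Definition norm_H : R := sum4 (fun a => sum4 (fun b => Rabs (Hh a b))).
Definition norm_HLT : R :=
  Rabs (lowc Hh (Lvec w) (Lvec w)) + Rabs (lowc Hh (Lvec w) S1) + Rabs (lowc Hh (Lvec w) S2).
Definition norm_d : R := sum4 (fun a => Rabs (D a)).
Definition norm_tb : R := sum4 (fun a => Rabs (tangential w D a)).
Definition norm_tb_d : R := sum4 (fun a => sum4 (fun b => Rabs (tb_d w DD a b))).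
Definition norm_tb_tb : R := sqrt (sum4 (fun a => sum4 (fun b => tb_tb w r D DD a b ^ 2))).
Definition rhs_val : R :=
  r * Rabs (lap_omega w r D DD) + norm_HLT * (r * norm_tb_d + norm_d)
  + norm_H * (r * norm_tb_tb + norm_tb + / r * Rabs ph).

Hypotheses (HW : w 1 * w 1 + w 2 * w 2 + w 3 * w 3 = 1) (Hr : 0 < r)
  (HS1 : S1 0%nat = 0) (HS2 : S2 0%nat = 0)
  (Hcompl : forall i j, (1 <= i <= 3)%nat -> (1 <= j <= 3)%nat ->
     proj w i j = S1 i * S1 j + S2 i * S2 j).

Lemma frame_diag i : (1 <= i <= 3)%nat -> S1 i * S1 i + S2 i * S2 i + w i * w i = 1.
Proof.
  intro Hi; pose proof (Hcompl i i Hi Hi) as E.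
  unfold proj, kron in E; rewrite Nat.eqb_refl in E; lra.
Qed.

Lemma Rabs_omega_le i : (1 <= i <= 3)%nat -> Rabs (w i) <= 1.
Proof.
  intro Hi; apply (Rabs_le_1_of_sqr_add _ (S1 i * S1 i + S2 i * S2 i)); [|nra].
  pose proof (frame_diag i Hi); lra.
Qed.

Lemma Lvec_unit_bounded : unit_bounded (Lvec w).
Proof. intros [|a] Ha; [simpl; rewrite Rabs_R1; lra | apply Rabs_omega_le; lia]. Qed.

Lemma Lbvec_unit_bounded : unit_bounded (Lbvec w).
Proof.
  intros [|a] Ha; simpl; [rewrite Rabs_R1; lra | rewrite Rabs_Ropp; apply Rabs_omega_le; lia].
Qed.

Lemma frame_unit_bounded_l : unit_bounded S1.
Proof.
  intros [|i] Hi; [rewrite HS1, Rabs_R0; lra|].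
  apply (Rabs_le_1_of_sqr_add _ (S2 (S i) * S2 (S i) + w (S i) * w (S i))); [|nra].
  pose proof (frame_diag (S i) ltac:(lia)); lra.
Qed.

Lemma frame_unit_bounded_r : unit_bounded S2.
Proof.
  intros [|i] Hi; [rewrite HS2, Rabs_R0; lra|].
  apply (Rabs_le_1_of_sqr_add _ (S1 (S i) * S1 (S i) + w (S i) * w (S i))); [|nra].
  pose proof (frame_diag (S i) ltac:(lia)); lra.
Qed.

Lemma norm_H_nonneg : 0 <= norm_H.
Proof. apply sum4_nonneg; intro; apply sum4_nonneg; intro; apply Rabs_pos. Qed.

Lemma norm_HLT_nonneg : 0 <= norm_HLT.
Proof.
  unfold norm_HLT; pose proof (Rabs_pos (lowc Hh (Lvec w) (Lvec w)));
    pose proof (Rabs_pos (lowc Hh (Lvec w) S1)); pose proof (Rabs_pos (lowc Hh (Lvec w) S2)); lra.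
Qed.

Lemma Rabs_proj_le i j : (1 <= i <= 3)%nat -> (1 <= j <= 3)%nat -> Rabs (proj w i j) <= 2.
Proof.
  intros Hi Hj; rewrite Hcompl by assumption.
  pose proof (frame_unit_bounded_l i ltac:(lia)); pose proof (frame_unit_bounded_l j ltac:(lia)).
  pose proof (frame_unit_bounded_r i ltac:(lia)); pose proof (frame_unit_bounded_r j ltac:(lia)).
  eapply Rle_trans; [apply Rabs_triang|].
  replace 2 with (1 * 1 + 1 * 1) by ring; apply Rplus_le_compat; now apply Rabs_mult_le.
Qed.

Lemma Rabs_tb_tb_le a b : (a < 4)%nat -> (b < 4)%nat -> Rabs (tb_tb w r D DD a b) <= norm_tb_tb.
Proof.
  intros Ha Hb; apply Rabs_le_sqrt.
  eapply Rle_trans; [apply (sum4_term_le (fun b => tb_tb w r D DD a b ^ 2) b)|];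
    [intro; apply pow2_ge_0 | exact Hb |].
  apply (sum4_term_le (fun a => sum4 (fun b => tb_tb w r D DD a b ^ 2)) a); [|exact Ha].
  intro; apply sum4_nonneg; intro; apply pow2_ge_0.
Qed.

Lemma Rabs_sum33_H_le (f : nat -> nat -> R) M :
  (forall m n, (1 <= m <= 3)%nat -> (1 <= n <= 3)%nat -> Rabs (f m n) <= M) -> 0 <= M ->
  Rabs (sum3 (fun m => sum3 (fun n => Hh m n * f m n))) <= norm_H * M.
Proof.
  intros Hf HM.
  apply Rle_trans with (sum3 (fun m => sum3 (fun n => Rabs (Hh m n))) * M).
  - eapply Rle_trans; [apply Rabs_sum3_le|].
    replace (sum3 (fun m => sum3 (fun n => Rabs (Hh m n))) * M)
      with (sum3 (fun m => sum3 (fun n => Rabs (Hh m n) * M))) by (unfold sum3; ring).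
    apply sum3_le_compat; intros m Hm; eapply Rle_trans; [apply Rabs_sum3_le|].
    apply sum3_le_compat; intros n Hn; apply Rabs_mult_le; [lra | auto].
  - apply Rmult_le_compat_r; [exact HM|]; unfold norm_H.
    apply Rle_trans with (sum3 (fun m => sum4 (fun n => Rabs (Hh m n)))).
    + apply sum3_le_compat; intros; apply sum3_le_sum4, Rabs_pos.
    + apply sum3_le_sum4, sum4_nonneg; intro; apply Rabs_pos.
Qed.

Lemma err_low_bound : Rabs (err_low w r ph D Hh) <= 2 * (norm_H * (norm_tb + / r * Rabs ph)).
Proof.
  assert (Htr : Rabs (trace_proj w Hh) <= norm_H * 2)
    by (apply Rabs_sum33_H_le; [apply Rabs_proj_le | lra]).
  assert (HLLb : Rabs (lowc Hh (Lvec w) (Lbvec w)) <= norm_H)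
    by (apply lowc_le_norm; [apply Lvec_unit_bounded | apply Lbvec_unit_bounded]).
  assert (Hlow : Rabs (tangential w D 0 - ph / r) <= norm_tb + / r * Rabs ph).
  { unfold Rminus, Rdiv; eapply Rle_trans; [apply Rabs_triang|].
    rewrite Rabs_Ropp, Rabs_mult, (Rabs_pos_eq (/ r)), Rmult_comm
      by (left; apply Rinv_0_lt_compat, Hr).
    apply Rplus_le_compat_r, (sum4_term_le (fun a => Rabs (tangential w D a))); [|lia].
    intro; apply Rabs_pos. }
  unfold err_low, Rdiv; rewrite Rabs_mult, (Rabs_pos_eq (/ 2)) by lra.
  pose proof norm_H_nonneg; pose proof (Rabs_pos (tangential w D 0 - ph / r)).
  assert (Rabs (trace_proj w Hh + lowc Hh (Lvec w) (Lbvec w)) <= 3 * norm_H)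
    by (eapply Rle_trans; [apply Rabs_triang | lra]).
  assert (Rabs ((trace_proj w Hh + lowc Hh (Lvec w) (Lbvec w)) * (tangential w D 0 - ph * / r))
    <= 3 * norm_H * (norm_tb + / r * Rabs ph)) by now apply Rabs_mult_le.
  nra.
Qed.

Lemma q_comp_bound : Rabs (q_comp w D) <= norm_d.
Proof.
  assert (Hrad : Rabs (radial w D) <= sum3 (fun j => Rabs (D j))).
  { eapply Rle_trans; [apply Rabs_sum3_le|]; apply sum3_le_compat; intros j Hj.
    rewrite <- (Rmult_1_l (Rabs (D j))); apply Rabs_mult_le; [apply Rabs_omega_le, Hj | lra]. }
  unfold q_comp, Rdiv, Rminus; rewrite Rabs_mult, (Rabs_pos_eq (/ 2)) by lra.
  pose proof (Rabs_triang (radial w D) (- D 0%nat)) as T; rewrite Rabs_Ropp in T.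
  pose proof (Rabs_pos (D 0%nat)); pose proof (Rabs_pos (radial w D + - D 0%nat)).
  unfold norm_d, sum4; unfold sum3 in Hrad; lra.
Qed.

Lemma err_tt_bound : Rabs (err_tt w r D DD Hh) <= 55 * (norm_H * norm_tb_tb).
Proof.
  pose proof norm_H_nonneg as HH0.
  assert (Htt0 : 0 <= norm_tb_tb) by apply sqrt_pos.
  assert (Hunit : forall X, unit_bounded X -> Rabs (lowc Hh (Lbvec w) X) <= norm_H)
    by (intros; apply lowc_le_norm; [apply Lbvec_unit_bounded | assumption]).
  assert (H1 : Rabs (lowc Hh (Lbvec w) (Lbvec w) / 4 * tb_tb w r D DD 0 0)
               <= norm_H * norm_tb_tb / 4).
  { unfold Rdiv; rewrite Rmult_assoc, (Rmult_comm (/ 4)), <- Rmult_assoc, Rabs_mult,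
      (Rabs_pos_eq (/ 4)) by lra.
    apply Rmult_le_compat_r; [lra|].
    apply Rabs_mult_le; [apply Hunit, Lbvec_unit_bounded | apply Rabs_tb_tb_le; lia]. }
  assert (H2 : Rabs (sum3 (fun i => sum3 (fun j =>
      lowc Hh (Lbvec w) (unit_vec i) * proj w i j * tb_tb w r D DD 0 j)))
      <= 3 * (3 * (norm_H * 2 * norm_tb_tb))).
  { apply Rabs_sum3_bound; intros i Hi; apply Rabs_sum3_bound; intros j Hj.
    repeat apply Rabs_mult_le;
      [apply Hunit, ev_unit_bounded | apply Rabs_proj_le | apply Rabs_tb_tb_le]; lia. }
  assert (H3 : Rabs (sum3 (fun m => sum3 (fun n => Hh m n * sum3 (fun i => sum3 (fun j =>
      proj w m i * proj w n j * tb_tb w r D DD i j)))))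
      <= norm_H * (3 * (3 * (2 * 2 * norm_tb_tb)))).
  { apply Rabs_sum33_H_le; [|lra]; intros m n Hm Hn.
    apply Rabs_sum3_bound; intros i Hi; apply Rabs_sum3_bound; intros j Hj.
    repeat apply Rabs_mult_le; first [apply Rabs_proj_le | apply Rabs_tb_tb_le]; lia. }
  unfold err_tt; unfold Rminus.
  eapply Rle_trans; [apply Rabs_triang|].
  eapply Rle_trans; [apply Rplus_le_compat_r, Rabs_triang|]; rewrite Rabs_Ropp.
  pose proof (Rmult_le_pos _ _ HH0 Htt0); lra.
Qed.

Lemma err_LS_frame : err_LS w DD Hh =
  lowc Hh (Lvec w) S1 * sum3 (fun j => S1 j * tb_dLb w DD j)
  + lowc Hh (Lvec w) S2 * sum3 (fun j => S2 j * tb_dLb w DD j).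
Proof.
  unfold err_LS, sum3; rewrite !Hcompl by lia.
  unfold lowc, unit_vec, kron, sum4, mink, Lvec; simpl; rewrite HS1, HS2; ring.
Qed.

Lemma err_LS_bound : Rabs (err_LS w DD Hh) <= norm_HLT * norm_tb_d.
Proof.
  assert (HV : sum3 (fun j => Rabs (tb_dLb w DD j)) <= norm_tb_d).
  { apply Rle_trans with (sum3 (fun j => sum4 (fun a => Rabs (tb_d w DD j a)))).
    - apply sum3_le_compat; intros j Hj; eapply Rle_trans; [apply Rabs_sum4_le|].
      apply sum4_le_compat; intros a Ha; rewrite <- (Rmult_1_l (Rabs (tb_d w DD j a))).
      apply Rabs_mult_le; [apply Lbvec_unit_bounded, Ha | lra].
    - apply sum3_le_sum4, sum4_nonneg; intro; apply Rabs_pos. }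
  assert (HS : forall S, unit_bounded S ->
            Rabs (sum3 (fun j => S j * tb_dLb w DD j)) <= norm_tb_d).
  { intros S HSb; eapply Rle_trans; [apply Rabs_sum3_le|]; eapply Rle_trans; [|exact HV].
    apply sum3_le_compat; intros j Hj; rewrite <- (Rmult_1_l (Rabs (tb_dLb w DD j))).
    apply Rabs_mult_le; [apply HSb; lia | lra]. }
  rewrite err_LS_frame; eapply Rle_trans; [apply Rabs_triang|].
  pose proof (Rabs_mult_le (lowc Hh (Lvec w) S1) _ _ _ (Rle_refl _) (HS S1 frame_unit_bounded_l)).
  pose proof (Rabs_mult_le (lowc Hh (Lvec w) S2) _ _ _ (Rle_refl _) (HS S2 frame_unit_bounded_r)).
  assert (0 <= norm_tb_d) by (apply sum4_nonneg; intro; apply sum4_nonneg; intro; apply Rabs_pos).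
  pose proof (Rabs_pos (lowc Hh (Lvec w) (Lvec w))).
  unfold norm_HLT; nra.
Qed.

Lemma trace_frame : lowc Hh S1 S1 + lowc Hh S2 S2 = trace_proj w Hh.
Proof.
  unfold trace_proj, sum3; rewrite !Hcompl by lia.
  unfold lowc, sum4, mink; simpl; rewrite HS1, HS2; ring.
Qed.

Lemma null_frame_rhs_bound : Rabs (null_frame_rhs w r ph D DD Hh) <= 55 * rhs_val.
Proof.
  assert (Htt0 : 0 <= norm_tb_tb) by apply sqrt_pos.
  assert (Htbd0 : 0 <= norm_tb_d)
    by (apply sum4_nonneg; intro; apply sum4_nonneg; intro; apply Rabs_pos).
  assert (Hd0 : 0 <= norm_d) by (apply sum4_nonneg; intro; apply Rabs_pos).
  assert (Htb0 : 0 <= norm_tb) by (apply sum4_nonneg; intro; apply Rabs_pos).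
  assert (Hph0 : 0 <= / r * Rabs ph)
    by (apply Rmult_le_pos; [left; apply Rinv_0_lt_compat | apply Rabs_pos]; lra).
  pose proof norm_H_nonneg as HH0; pose proof norm_HLT_nonneg as HLT0.
  assert (Hrabs : forall x, Rabs (r * x) = r * Rabs x)
    by (intro; rewrite Rabs_mult, Rabs_pos_eq by lra; reflexivity).
  assert (Hlow := err_low_bound).
  assert (HLL : Rabs (lowc Hh (Lvec w) (Lvec w) * q_comp w D) <= norm_HLT * norm_d).
  { apply Rabs_mult_le; [|exact q_comp_bound]; unfold norm_HLT.
    pose proof (Rabs_pos (lowc Hh (Lvec w) S1)); pose proof (Rabs_pos (lowc Hh (Lvec w) S2)); lra. }
  assert (Htt : r * Rabs (err_tt w r D DD Hh) <= 55 * (norm_H * (r * norm_tb_tb))).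
  { replace (55 * (norm_H * (r * norm_tb_tb))) with (r * (55 * (norm_H * norm_tb_tb))) by ring.
    apply Rmult_le_compat_l; [lra | exact err_tt_bound]. }
  assert (HLS : r * Rabs (err_LS w DD Hh) <= norm_HLT * (r * norm_tb_d)).
  { replace (norm_HLT * (r * norm_tb_d)) with (r * (norm_HLT * norm_tb_d)) by ring.
    apply Rmult_le_compat_l; [lra | exact err_LS_bound]. }
  unfold null_frame_rhs; eapply Rle_trans; [apply Rabs_combination5_le|]; rewrite !Hrabs.
  pose proof (Rmult_le_pos _ _ (Rlt_le _ _ Hr) (Rabs_pos (lap_omega w r D DD))).
  pose proof (Rmult_le_pos _ _ HLT0 Hd0); pose proof (Rmult_le_pos _ _ HH0 Htb0);
    pose proof (Rmult_le_pos _ _ HH0 Hph0).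
  pose proof (Rmult_le_pos _ _ HLT0 (Rmult_le_pos _ _ (Rlt_le _ _ Hr) Htbd0)).
  unfold rhs_val; lra.
Qed.

Lemma lhs_estimate :
  Rabs (/ 4 * lowc Hh (Lbvec w) (Lvec w)) < / 4 ->
  (forall a b, (a < 4)%nat -> (b < 4)%nat -> DD a b = DD b a) ->
  (forall a b, (a < 4)%nat -> (b < 4)%nat -> Hh a b = Hh b a) ->
  Rabs (lhs_val w r ph D DD Hh (lowc Hh S1 S1 + lowc Hh S2 S2) (box_m DD + contr_H DD Hh))
  <= 110 * rhs_val.
Proof.
  intros Hsmall HDD HH.
  assert (Hg : g_LLb w Hh < - / 4) by (unfold g_LLb; apply Rabs_def2 in Hsmall; lra).
  rewrite trace_frame.
  assert (E : lhs_val w r ph D DD Hh (trace_proj w Hh) (box_m DD + contr_H DD Hh)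
              = null_frame_rhs w r ph D DD Hh / (2 * g_LLb w Hh)).
  { rewrite <- null_frame_identity by (assumption || lra); field; lra. }
  rewrite E; unfold Rdiv; rewrite Rabs_mult, Rabs_inv, (Rabs_left (2 * g_LLb w Hh)) by lra.
  assert (0 < / - (2 * g_LLb w Hh) <= 2).
  { split; [apply Rinv_0_lt_compat; lra|].
    rewrite <- (Rinv_inv 2); apply Rinv_le_contravar; lra. }
  pose proof null_frame_rhs_bound; pose proof (Rabs_pos (null_frame_rhs w r ph D DD Hh)).
  nra.
Qed.

End PointEstimate.

(** * Orthonormal frames and the inverse metric *)

Lemma orthonormal_columns (a1 a2 a3 b1 b2 b3 c1 c2 c3 : R) :
  a1 * a1 + a2 * a2 + a3 * a3 = 1 -> a1 * b1 + a2 * b2 + a3 * b3 = 0 ->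
  a1 * c1 + a2 * c2 + a3 * c3 = 0 -> b1 * b1 + b2 * b2 + b3 * b3 = 1 ->
  b1 * c1 + b2 * c2 + b3 * c3 = 0 -> c1 * c1 + c2 * c2 + c3 * c3 = 1 ->
  a1 * a1 + b1 * b1 + c1 * c1 = 1 /\ a1 * a2 + b1 * b2 + c1 * c2 = 0 /\
  a1 * a3 + b1 * b3 + c1 * c3 = 0 /\ a2 * a2 + b2 * b2 + c2 * c2 = 1 /\
  a2 * a3 + b2 * b3 + c2 * c3 = 0 /\ a3 * a3 + b3 * b3 + c3 * c3 = 1.
Proof. intros; repeat split; nsatz. Qed.

Lemma om_unit p : 0 < rad p -> om p 1 * om p 1 + om p 2 * om p 2 + om p 3 * om p 3 = 1.
Proof.
  intro Hr; unfold om.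
  assert (Hsq : rad p * rad p
                = coord p 1 * coord p 1 + coord p 2 * coord p 2 + coord p 3 * coord p 3).
  { unfold rad, sum3; rewrite sqrt_sqrt; simpl; [ring | nra]. }
  transitivity ((coord p 1 * coord p 1 + coord p 2 * coord p 2 + coord p 3 * coord p 3)
                / (rad p * rad p)); [field; lra | rewrite <- Hsq; field; lra].
Qed.

Lemma sphere_frame_complete p S1 S2 : 0 < rad p -> sphere_frame p S1 S2 ->
  forall i j, (1 <= i <= 3)%nat -> (1 <= j <= 3)%nat ->
  proj (om p) i j = S1 i * S1 j + S2 i * S2 j.
Proof.
  intros Hr [_ [_ [N1 [N2 [N12 [O1 O2]]]]]] i j Hi Hj; unfold sum3 in *.
  destruct (orthonormal_columns (om p 1) (om p 2) (om p 3) (S1 1%nat) (S1 2%nat) (S1 3%nat)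
    (S2 1%nat) (S2 2%nat) (S2 3%nat)) as [C11 [C12 [C13 [C22 [C23 C33]]]]];
    try (apply om_unit, Hr); try lra.
  unfold proj, kron; index_cases i; index_cases j; simpl; lra.
Qed.

Lemma inverse_sym (G Gi : nat -> nat -> R) : (forall a b, G a b = G b a) ->
  (forall a b, (a < 4)%nat -> (b < 4)%nat ->
     sum4 (fun mu => Gi a mu * G mu b) = if Nat.eqb a b then 1 else 0) ->
  forall a b, (a < 4)%nat -> (b < 4)%nat -> Gi a b = Gi b a.
Proof.
  intros Hs HI a b Ha Hb.
  (* [Gi b a = sum_c (Gi G)_{ac} Gi_{bc}]; regrouping with [G = G^T] gives
     [sum_mu Gi_{a mu} (Gi G)_{b mu} = Gi a b]. *)
  assert (E1 : Gi b a = sum4 (fun c => sum4 (fun mu => Gi a mu * G mu c) * Gi b c)).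
  { unfold sum4 at 1; rewrite !HI by lia; index_cases a; simpl; ring. }
  assert (E2 : sum4 (fun c => sum4 (fun mu => Gi a mu * G mu c) * Gi b c) =
               sum4 (fun mu => Gi a mu * sum4 (fun c => Gi b c * G c mu))).
  { unfold sum4; rewrite (Hs 1%nat 0%nat), (Hs 2%nat 0%nat), (Hs 3%nat 0%nat),
      (Hs 2%nat 1%nat), (Hs 3%nat 1%nat), (Hs 3%nat 2%nat); ring. }
  rewrite E1, E2; unfold sum4 at 1; rewrite !HI by lia; index_cases b; simpl; ring.
Qed.

Lemma mink_sym a b : mink a b = mink b a.
Proof.
  unfold mink; rewrite Nat.eqb_sym; destruct (Nat.eqb b a) eqn:E; [|reflexivity].
  now apply Nat.eqb_eq in E as ->.
Qed.

Lemma box_g_split (Gi DD : nat -> nat -> R) :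
  sum4 (fun a => sum4 (fun b => Gi a b * DD a b))
  = box_m DD + contr_H DD (fun a b => Gi a b - mink a b).
Proof. unfold box_m, contr_H, sum4; ring. Qed.

Section Solution.
Variables (phi : pt -> R) (p : pt).
Hypotheses (HC : C2 phi) (Hr : 0 < rad p).

Lemma pd_dq_rphi a : (a < 4)%nat ->
  pd a (dq (fun y => rad y * phi y)) p
  = d_dq_rphi (om p) (rad p) (phi p) (grad phi p) (hess phi p) a.
Proof.
  intro Ha.
  rewrite (pd_of_has_pd _ _ _ _ (has_pd_dq (fun y => rad y * phi y) p a _ Ha Hr
    (fun j Hj => has_pd_pd_rphi phi p a j HC Hr Ha Hj))).
  unfold d_dq_rphi, d_q_comp, d_radial, grad, sum3; rewrite !pd_rphi by (auto; lia).
  reflexivity.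
Qed.

Lemma tb_tb_eq a b : (a < 4)%nat -> (b < 4)%nat ->
  tb a (tb b phi) p = tb_tb (om p) (rad p) (grad phi p) (hess phi p) a b.
Proof.
  intros Ha Hb; apply tb_of_pd; [|exact Ha].
  intros c Hc; apply pd_of_has_pd, has_pd_tb; auto.
  intros j Hj; now apply has_pd_pd_C2.
Qed.

Lemma lap_omega_eq :
  sum3 (fun i => tb i (tb i phi) p) = lap_omega (om p) (rad p) (grad phi p) (hess phi p).
Proof. unfold lap_omega, sum3; rewrite !tb_tb_eq by lia; reflexivity. Qed.

Lemma norm_tb_tb_eq :
  sqrt (sum4 (fun a => sum4 (fun b => tb a (tb b phi) p ^ 2)))
  = norm_tb_tb (om p) (rad p) (grad phi p) (hess phi p).
Proof. unfold norm_tb_tb, sum4; rewrite !tb_tb_eq by lia; reflexivity. Qed.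

End Solution.

Theorem corollary4p4 :
  exists C : R, 0 < C /\
  forall (g ginv : pt -> nat -> nat -> R) (phi F : pt -> R),
    (* g is a metric (symmetric) with inverse g^{αβ} = ginv *)
    (forall p a b, g p a b = g p b a) ->
    (forall p a b, (a < 4)%nat -> (b < 4)%nat ->
       sum4 (fun mu => ginv p a mu * g p mu b) = if Nat.eqb a b then 1 else 0) ->
    (* |H^{L Lbar}| < 1/4, where H = ginv - m and H^{L Lbar} = 1/4 H_{Lbar L} *)
    (forall p, 0 < rad p ->
       Rabs (/4 * lowc (fun a b => ginv p a b - mink a b) (Lbv p) (Lv p)) < /4) ->
    C2 phi ->
    (* tilde Box_g phi = g^{αβ} ∂_α ∂_β phi = F *)
    (forall p, sum4 (fun a => sum4 (fun b => ginv p a b * pd a (pd b phi) p)) = F p) ->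
    forall (p : pt) (S1 S2 : nat -> R),
      0 < rad p -> sphere_frame p S1 S2 ->
      let H := fun a b => ginv p a b - mink a b in
      let r := rad p in
      let L := Lv p in
      let Lb := Lbv p in
      let gLLb := - / 2 + / 4 * lowc H Lb L in
      let trH := lowc H S1 S1 + lowc H S2 S2 in
      let rphi := fun x => rad x * phi x in
      let Delta_om := sum3 (fun i => tb i (tb i phi) p) in
      let abs_d := sum4 (fun a => Rabs (pd a phi p)) in
      let abs_tb := sum4 (fun a => Rabs (tb a phi p)) in
      let abs_tbd := sum4 (fun a => sum4 (fun b => Rabs (tb a (pd b phi) p))) in
      let abs_tb2 := sqrt (sum4 (fun a => sum4 (fun b => (tb a (tb b phi) p) ^ 2))) in
      let abs_HLT := Rabs (lowc H L L) + Rabs (lowc H L S1) + Rabs (lowc H L S2) in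
      let abs_H := sum4 (fun a => sum4 (fun b => Rabs (H a b))) in
      Rabs (4 * ds (dq rphi) p
            - lowc H L L / (2 * gLLb) * dq (dq rphi) p
            - (trH + lowc H L Lb) / (2 * gLLb * r) * dq rphi p
            + r * F p / (2 * gLLb))
      <= C * (r * Rabs Delta_om
              + abs_HLT * (r * abs_tbd + abs_d)
              + abs_H * (r * abs_tb2 + abs_tb + / r * Rabs (phi p))).
Proof.
  exists 110; split; [lra|].
  intros g ginv phi F Hg Hinv HLLb HC HF p S1 S2 Hr Hframe; cbv zeta.
  pose proof (sphere_frame_complete p S1 S2 Hr Hframe) as Hcompl.
  destruct Hframe as [HS1 [HS2 _]].
  rewrite (ds_of_pd _ _ _ (pd_dq_rphi phi p HC Hr)), (dq_of_pd _ _ _ (pd_dq_rphi phi p HC Hr)),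
    (dq_of_pd _ _ _ (fun a Ha => pd_rphi phi p a HC Hr Ha)), <- HF, box_g_split,
    lap_omega_eq, norm_tb_tb_eq by assumption.
  apply lhs_estimate; auto using om_unit, HLLb.
  - intros a b Ha Hb; now apply hess_sym.
  - intros a b Ha Hb; now rewrite (inverse_sym (g p) (ginv p) (Hg p) (Hinv p) a b), mink_sym.
Qed.
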